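(* Let $0<m\le L$, let $f:\mathbb R^d\to\mathbb R$ be $m$-strongly convex and $L$-smooth with minimizer $x^\star$, and fix $\bar b>0$ and initial data $x(0),\dot x(0)$ for $\ddot x+\bar b\sqrt m\dot x+\nabla f(x)=0$, with solution $x(t)$. For small $h>0$ run the iteration $x_{k+1}=x_k+\beta_h(x_k-x_{k-1})-\alpha\nabla f(y_k)$, $y_k=x_k+\beta_h(x_k-x_{k-1})$, with $\alpha=h^2$ and $\beta_h=1-\bar b\sqrt m h+o(h)$ as $h\downarrow0$, from starting points $x_{-1}=x_{-1}(h)$, $x_0=x_0(h)$ with $x_0\to x(0)$ and $(x_0-x_{-1})/h\to\dot x(0)$ as $h\downarrow0$. Let $\delta=\sqrt m h$, $b_h=(1-\beta_h)/\delta$, $r_h$ the unique real root of $\Xi_\delta(r,b_h)=0$, $\rho_h^2=1-r_h\delta$, and $$V_k^h=\rho_h^{-2k}\Big(f(x_k)-f(x^\star)+\tfrac m2\big\|(1-r_h\delta)\tfrac{x_k-x_{k-1}}{\delta}+r_h(x_k-x^\star)\big\|^2\Big).$$ Let $\bar r$ be the unique real root of $\bar\Xi(\bar r,\bar b)=0$, $\lambda=\sqrt m\bar r$, and $\bar V(t)=e^{\lambda t}\big(f(x(t))-f(x^\star)+\frac m2\|\dot x(t)/\sqrt m+\bar r(x(t)-x^\star)\|^2\big)$. Then $r_h\to\bar r$, and in the limit $h\downarrow0$, $k\to\infty$ with $kh\to t$: $x_k\to x(t)$, $(x_{k+1}-x_k)/h\to\dot x(t)$, and $V_k^h\to\bar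 V(t)$.
   Context: $\Xi_\delta(r,b)=(r+\delta)(1-\delta^2)b^2-2(1+r^2)(1-\delta^2)b+(r^3-3r^2\delta+3r-\delta)$ and $\bar\Xi(\bar r,\bar b)=\bar r\bar b^2-2(\bar r^2+1)\bar b+\bar r^3+3\bar r$. $f$ $m$-strongly convex: $f(y)\ge f(x)+\nabla f(x)^T(y-x)+\frac m2\|y-x\|^2$; $L$-smooth: $\nabla f$ is $L$-Lipschitz. *)

From HB Require Import structures.
From mathcomp Require Import all_boot all_order all_algebra.
From mathcomp Require Import all_classical all_reals all_analysis.
Set Implicit Arguments. Unset Strict Implicit. Unset Printing Implicit Defensive.
Import Order.TTheory GRing.Theory Num.Theory.
Import numFieldNormedType.Exports.
Local Open Scope ring_scope.

Section Defs.
Variables (R : realType) (d : nat).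
Local Notation vec := 'rV[R]_d.

Definition dotv (u v : vec) : R := \sum_(i < d) u 0 i * v 0 i.
Definition enorm (u : vec) : R := Num.sqrt (dotv u u).

Definition is_gradient (f : vec -> R) (g : vec -> vec) : Prop :=
  forall x, differentiable f x /\ forall v, ('d f x : vec -> R) v = dotv (g x) v.

Definition strongly_convex (m : R) (f : vec -> R) (g : vec -> vec) : Prop :=
  forall x y, f x + dotv (g x) (y - x) + m / 2 * enorm (y - x) ^+ 2 <= f y.

Definition L_smooth (L : R) (g : vec -> vec) : Prop :=
  forall x y, enorm (g x - g y) <= L * enorm (x - y).

(* Nesterov-type iteration: nag alpha beta g (x_{-1}, x_0) k = (x_{k-1}, x_k) *)
Fixpoint nag (alpha beta : R) (g : vec -> vec) (p : vec * vec) (k : nat)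
  : vec * vec :=
  match k with
  | 0 => p
  | k'.+1 =>
    let q := nag alpha beta g p k' in
    let y := q.2 + beta *: (q.2 - q.1) in
    (q.2, y - alpha *: g y)
  end.
End Defs.

Definition Xi {R : realType} (delta r b : R) : R :=
  (r + delta) * (1 - delta ^+ 2) * b ^+ 2 - 2 * (1 + r ^+ 2) * (1 - delta ^+ 2) * b
  + (r ^+ 3 - 3 * r ^+ 2 * delta + 3 * r - delta).

Definition Xibar {R : realType} (r b : R) : R :=
  r * b ^+ 2 - 2 * (r ^+ 2 + 1) * b + r ^+ 3 + 3 * r.

From HB Require Import structures.
From mathcomp Require Import all_boot all_order all_algebra.
From mathcomp Require Import all_classical all_reals all_analysis.
From mathcomp Require Import ring lra.
Set Implicit Arguments.
Unset Strict Implicit.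
Unset Printing Implicit Defensive.
Import Order.TTheory GRing.Theory Num.Theory.
Import numFieldNormedType.Exports.
Local Open Scope classical_set_scope.
Local Open Scope ring_scope.

(* Xi_delta(., b) and Xibar(., bbar) are monic cubics in r; a monic
      cubic with a unique real root changes sign exactly there, so the sign
      changes of Xi_delta(., b_h) around rbar +- e, inherited from Xibar by
      continuity in (delta, b_h) -> (0, bbar), trap r_h near rbar.
   2. ODE regularity.  On [0, T] the solution x has bounded x', x'' and obeys
      uniform second-order Taylor bounds (mean value inequality on coordinates).
   3. Scheme error.  In position/velocity form the iteration is a consistent
      one-step discretization of x' = v, v' = -c v - g(x); the global errors
      e_k, w_k satisfy a one-step recursion, and a discrete Gronwall inequality
      bounds them uniformly for k h <= T by terms that vanish as h -> 0.
   4. Lyapunov limit.  (1 - r_h delta)^(-k) -> exp(sqrt(m) rbar t) when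
      k h -> t, and the remaining terms of V_k^h converge by continuity. *)

Section CubicRoots.
Variable R : realType.

Lemma quadratic_ge0_or_roots (p q : R) :
  (forall r, 0 <= r ^+ 2 + p * r + q) \/
  exists r1 r2, [/\ r1 != r2, r1 ^+ 2 + p * r1 + q = 0 & r2 ^+ 2 + p * r2 + q = 0].
Proof.
case: (lerP (p ^+ 2 - 4 * q) 0) => disc; [left => r | right].
  by have := sqr_ge0 (r + p / 2); nra.
set s := Num.sqrt (p ^+ 2 - 4 * q).
have s2 : s ^+ 2 = p ^+ 2 - 4 * q by rewrite sqr_sqrtr // ltW.
have s_gt0 : 0 < s by rewrite sqrtr_gt0.
have root e : e ^+ 2 = s ^+ 2 -> ((- p + e) / 2) ^+ 2 + p * ((- p + e) / 2) + q = 0.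
  move=> e2; have -> : ((- p + e) / 2) ^+ 2 + p * ((- p + e) / 2) + q =
    (e ^+ 2 - (p ^+ 2 - 4 * q)) / 4 by field.
  by rewrite e2 s2 subrr mul0r.
exists ((- p + s) / 2), ((- p + (- s)) / 2); split.
- by apply/eqP => e; lra.
- exact: root.
- by apply: root; rewrite sqrrN.
Qed.

Lemma cubic_sign (P : R -> R) (a2 a1 a0 r0 : R) :
  (forall r, P r = r ^+ 3 + a2 * r ^+ 2 + a1 * r + a0) ->
  (forall r, P r = 0 <-> r = r0) ->
  forall r, (r < r0 -> P r < 0) /\ (r0 < r -> 0 < P r).
Proof.
move=> P_def P_root.
set p := a2 + r0; set q := a1 + a2 * r0 + r0 ^+ 2.
have P_factor r : P r = (r - r0) * (r ^+ 2 + p * r + q).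
  have := (P_root r0).2 erefl; rewrite !P_def /p /q => P_r0.
  have -> : a0 = - (r0 ^+ 3 + a2 * r0 ^+ 2 + a1 * r0) by lra.
  ring.
have root_of_Q r : r ^+ 2 + p * r + q = 0 -> r = r0.
  by move=> Qr; apply/P_root; rewrite P_factor Qr mulr0.
have Q_gt0 r : r != r0 -> 0 < r ^+ 2 + p * r + q.
  move=> r_neq; rewrite lt_def; apply/andP; split.
    by apply/eqP => /root_of_Q /eqP; rewrite (negPf r_neq).
  case: (quadratic_ge0_or_roots p q) => [-> // | [r1 [r2 [r12 /root_of_Q e1 /root_of_Q e2]]]].
  by move: r12; rewrite e1 e2 eqxx.
move=> r; split => hr; rewrite P_factor.
  by rewrite nmulr_rlt0 ?subr_lt0 // Q_gt0 // lt_eqF.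
by rewrite mulr_gt0 ?subr_gt0 // Q_gt0 // gt_eqF.
Qed.

Lemma root_cvg_of_sign_change (T : Type) (F : set_system T) (FF : Filter F)
  (Q : T -> R -> R) (q : R -> R) (rt : T -> R) (r0 : R) :
  (forall e, 0 < e -> q (r0 - e) < 0 /\ 0 < q (r0 + e)) ->
  (forall s, Q t s @[t --> F] --> q s) ->
  (\forall t \near F, forall s, (s < rt t -> Q t s < 0) /\ (rt t < s -> 0 < Q t s)) ->
  rt t @[t --> F] --> r0.
Proof.
move=> q_sign Q_cvg Q_sign; apply/cvgrPdist_lt => e e0.
have e2 : 0 < e / 2 by rewrite divr_gt0.
have [q_left q_right] := q_sign _ e2.
have Q_left : \forall t \near F, Q t (r0 - e / 2) < 0.
  exact: cvgr_lt (Q_cvg _) _ q_left.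
have Q_right : \forall t \near F, 0 < Q t (r0 + e / 2).
  exact: cvgr_gt (Q_cvg _) _ q_right.
near=> t.
have Q_sign_t : forall s, (s < rt t -> Q t s < 0) /\ (rt t < s -> 0 < Q t s).
  by near: t.
have [_ left_below] := Q_sign_t (r0 - e / 2).
have [right_above _] := Q_sign_t (r0 + e / 2).
have lo : r0 - e / 2 <= rt t.
  rewrite leNgt; apply/negP => /left_below.
  by rewrite ltNge => /negP; apply; apply: ltW; near: t.
have hi : rt t <= r0 + e / 2.
  rewrite leNgt; apply/negP => /right_above.
  by rewrite ltNge => /negP; apply; apply: ltW; near: t.
rewrite ltr_norml; apply/andP; split; lra.
Unshelve. all: by end_near.
Qed.

Lemma Xi_cvg (T : Type) (F : set_system T) (FF : Filter F) (delta b : T -> R) (r b0 : R) :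
  delta t @[t --> F] --> 0 -> b t @[t --> F] --> b0 ->
  Xi (delta t) r (b t) @[t --> F] --> Xibar r b0.
Proof.
move=> delta0 b_b0.
have -> : Xibar r b0 = Xi 0 r b0 by rewrite /Xi /Xibar; ring.
rewrite /Xi !expr2.
repeat first [exact: cvg_cst | exact: delta0 | exact: b_b0
  | apply: cvgD | apply: cvgB | apply: cvgM | apply: cvgN].
Qed.

Lemma friction_cvg (m bbar : R) (beta : R -> R) : 0 < m ->
  (beta h - (1 - bbar * Num.sqrt m * h)) / h @[h --> 0^'+] --> 0 ->
  (1 - beta h) / (Num.sqrt m * h) @[h --> 0^'+] --> bbar.
Proof.
move=> m0 beta_o; have sm0 : 0 < Num.sqrt m by rewrite sqrtr_gt0.
have : bbar - ((beta h - (1 - bbar * Num.sqrt m * h)) / h) / Num.sqrt m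
    @[h --> 0^'+] --> bbar - 0 / Num.sqrt m.
  by apply: cvgB; [exact: cvg_cst | apply: cvgM; [exact: beta_o | exact: cvg_cst]].
rewrite mul0r subr0; apply: cvg_trans; apply: near_eq_cvg; near=> h.
have h0 : 0 < h by near: h; exact: nbhs_right_gt.
by rewrite /=; field; rewrite !gt_eqF.
Unshelve. all: by end_near.
Qed.

Lemma rate_cvg (m bbar : R) (beta rh : R -> R) (rbar : R) :
  0 < m ->
  (beta h - (1 - bbar * Num.sqrt m * h)) / h @[h --> 0^'+] --> 0 ->
  (exists h0 : R, 0 < h0 /\ forall h, 0 < h < h0 -> forall r : R,
      Xi (Num.sqrt m * h) r ((1 - beta h) / (Num.sqrt m * h)) = 0 <-> r = rh h) ->
  (forall r : R, Xibar r bbar = 0 <-> r = rbar) ->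
  rh h @[h --> 0^'+] --> rbar.
Proof.
move=> m0 beta_o [h0 [h0_gt0 rh_root]] rbar_root.
have Xibar_sign := @cubic_sign (fun r => Xibar r bbar) (- 2 * bbar) (bbar ^+ 2 + 3)
  (- 2 * bbar) rbar (fun r => ltac:(rewrite /Xibar; ring)) rbar_root.
apply: (@root_cvg_of_sign_change _ _ _
  (fun h s => Xi (Num.sqrt m * h) s ((1 - beta h) / (Num.sqrt m * h)))
  (fun s => Xibar s bbar)).
- move=> e e0; split; [apply: (Xibar_sign _).1 | apply: (Xibar_sign _).2]; lra.
- move=> s; apply: Xi_cvg; last exact: friction_cvg.
  suff : Num.sqrt m * h @[h --> 0^'+] --> Num.sqrt m * 0 by rewrite mulr0.
  apply: cvgM; first exact: cvg_cst.
  by apply: cvg_at_right_filter; exact: cvg_id.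
near=> h; set dl := Num.sqrt m * h; set b := (1 - beta h) / dl.
have h_range : 0 < h < h0.
  by apply/andP; split; near: h; [exact: nbhs_right_gt | exact: nbhs_right_lt].
apply: (@cubic_sign (fun s => Xi dl s b) (- 2 * (1 - dl ^+ 2) * b - 3 * dl)
  ((1 - dl ^+ 2) * b ^+ 2 + 3) (dl * (1 - dl ^+ 2) * b ^+ 2 - 2 * (1 - dl ^+ 2) * b - dl)
  _ _ (rh_root h h_range)).
by move=> r; rewrite /Xi; ring.
Unshelve. all: by end_near.
Qed.
End CubicRoots.

Section VectorNorms.
Variables (R : realType) (d : nat).
Local Notation vec := 'rV[R]_d.

(* The library norm on row vectors is the sup norm of the coordinates. *)
Lemma coord_le_norm (u : vec) i : `|u 0 i| <= `|u|.
Proof.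
rewrite [leRHS]/Num.Def.normr /= mx_normrE.
exact: (le_bigmax _ _ (0, i)).
Qed.

Lemma norm_le_coord (u : vec) (B : R) : 0 <= B ->
  (forall i, `|u 0 i| <= B) -> `|u| <= B.
Proof.
move=> B0 u_le; rewrite [leLHS]/Num.Def.normr /= mx_normrE.
by apply: bigmax_le => // -[i j] _ /=; rewrite (ord1 i).
Qed.

Lemma dotv_ge0 (u : vec) : 0 <= dotv u u.
Proof. by apply: sumr_ge0 => i _; rewrite -expr2 sqr_ge0. Qed.

Lemma enorm_sq (u : vec) : enorm u ^+ 2 = dotv u u.
Proof. by rewrite /enorm sqr_sqrtr // dotv_ge0. Qed.

Lemma norm_le_enorm (u : vec) : `|u| <= enorm u.
Proof.
apply: norm_le_coord; first by rewrite /enorm sqrtr_ge0.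
move=> i; rewrite /enorm -sqrtr_sqr ler_sqrt; last exact: dotv_ge0.
rewrite /dotv (bigD1 i) //= -expr2 lerDl.
by apply: sumr_ge0 => j _; rewrite -expr2 sqr_ge0.
Qed.

Lemma enorm_le_norm (u : vec) : enorm u <= d%:R * `|u|.
Proof.
rewrite /enorm -[leRHS]ger0_norm; last by rewrite mulr_ge0.
rewrite -sqrtr_sqr ler_sqrt; last by rewrite sqr_ge0.
apply: (@le_trans _ _ (\sum_(i < d) `|u| ^+ 2)).
  apply: ler_sum => i _.
  by rewrite -expr2 -real_normK ?num_real // lerXn2r ?nnegrE // coord_le_norm.
rewrite sumr_const card_ord.
case: d u => [|n] u; first by rewrite mulr0n sqr_ge0.
rewrite -[X in X <= _]mulr_natr exprMn mulrC ler_wpM2r ?sqr_ge0 //.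
by rewrite expr2 -natrM ler_nat leq_pmulr.
Qed.

Lemma smooth_lipschitz_norm (L : R) (g : vec -> vec) : 0 <= L -> L_smooth L g ->
  forall u v, `|g u - g v| <= L * d%:R * `|u - v|.
Proof.
move=> L0 g_smooth u v; apply: le_trans (norm_le_enorm _) _.
apply: le_trans (g_smooth u v) _.
by rewrite -mulrA ler_wpM2l // enorm_le_norm.
Qed.

Lemma dotv_cvg (u : nat -> vec) (U : vec) :
  u n @[n --> \oo] --> U -> dotv (u n) (u n) @[n --> \oo] --> dotv U U.
Proof.
move=> u_U; apply: (@cvg_big _ _ +%R 0 xpredT add_continuous) => // i _.
have u_Ui : u n 0 i @[n --> \oo] --> U 0 i.
  exact: (cvg_comp _ _ u_U (@coord_continuous _ _ _ 0 i U)).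
exact: cvgM.
Qed.
End VectorNorms.

Section VectorCalculus.
Variables (R : realType) (d : nat).
Local Notation vec := 'rV[R]_d.
Variables (F F' : R -> vec).
Hypothesis F_deriv : forall t : R, is_derive t (1 : R) F (F' t).

Lemma derive_coord i (t : R) : is_derive t (1 : R) (fun u => F u 0 i) (F' t 0 i).
Proof.
case: (F_deriv t) => F_derivable F'_eq.
apply: DeriveDef; first exact: ((derivable_mxP F t 1).1 F_derivable 0 i).
by rewrite -F'_eq (derive_mx F_derivable) mxE.
Qed.

Lemma continuous_of_derive : continuous F.
Proof.
move=> t; apply: differentiable_continuous; apply/derivable1_diffP.
by case: (F_deriv t).
Qed.

Lemma mvt_norm (w : vec) (a b B : R) : a <= b -> 0 <= B ->
  (forall u, a <= u <= b -> `|F' u - w| <= B) ->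
  `|F b - F a - (b - a) *: w| <= (b - a) * B.
Proof.
move=> ab B0 F'_near; apply: norm_le_coord; first by rewrite mulr_ge0 // subr_ge0.
move=> i; rewrite !mxE.
have [c c_ab ->] := @MVT_segment R (fun u => F u 0 i) (fun u => F' u 0 i) a b ab
  (fun u _ => derive_coord i u) (continuous_subspaceT (fun u =>
    continuous_comp (@continuous_of_derive u) (@coord_continuous _ _ _ 0 i _))).
have -> : F' c 0 i * (b - a) - (b - a) * w 0 i = (b - a) * (F' c - w) 0 i.
  by rewrite !mxE; ring.
rewrite normrM ger0_norm ?subr_ge0 //; apply: ler_wpM2l; first by rewrite subr_ge0.
apply: le_trans (coord_le_norm _ _) (F'_near c _).
by move: c_ab; rewrite in_itv.
Qed.

Lemma lipschitz_of_derive_bound (a b B : R) : a <= b -> 0 <= B ->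
  (forall u, a <= u <= b -> `|F' u| <= B) -> `|F b - F a| <= B * (b - a).
Proof.
move=> ab B0 F'_le; rewrite mulrC.
by have := mvt_norm (w := 0) ab B0; rewrite scaler0 subr0; apply => u /F'_le; rewrite subr0.
Qed.

Lemma taylor_lipschitz (a b M : R) : a <= b -> 0 <= M ->
  (forall u v, a <= v -> v <= u -> u <= b -> `|F' u - F' v| <= M * (u - v)) ->
  `|F b - F a - (b - a) *: F' b| <= M * (b - a) ^+ 2 /\
  `|F b - F a - (b - a) *: F' a| <= M * (b - a) ^+ 2.
Proof.
move=> ab M0 F'_lip; have Mba0 : 0 <= M * (b - a) by rewrite mulr_ge0 ?subr_ge0.
rewrite expr2 mulrA [M * _]mulrC -mulrA; split; apply: mvt_norm => // u /andP[au ub].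
  by rewrite distrC; apply: le_trans (F'_lip _ _ au ub (lexx b)) _; apply: ler_wpM2l => //; lra.
by apply: le_trans (F'_lip _ _ (lexx a) au ub) _; apply: ler_wpM2l => //; lra.
Qed.
End VectorCalculus.

Lemma bounded_on_segment (R : realType) (d : nat) (F : R -> 'rV[R]_d) :
  continuous F -> forall a b, a <= b ->
  exists B, 0 <= B /\ forall t, a <= t <= b -> `|F t| <= B.
Proof.
move=> F_cont a b ab.
have [c c_ab c_max] := @EVT_max R (fun t => `|F t|) a b ab
  (continuous_subspaceT (fun t => continuous_comp (F_cont t) (@norm_continuous _ _ (F t)))).
exists `|F c|; split; first exact: normr_ge0.
by move=> t t_ab; apply: c_max; rewrite in_itv.
Qed.

Section DampedODE.
Variables (R : realType) (d : nat).
Local Notation vec := 'rV[R]_d.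
Variables (g : vec -> vec) (K c : R) (x dx ddx : R -> vec).
Hypotheses (K0 : 0 <= K) (c0 : 0 <= c)
  (g_lip : forall u v, `|g u - g v| <= K * `|u - v|)
  (x_deriv : forall t : R, is_derive t (1 : R) x (dx t))
  (dx_deriv : forall t : R, is_derive t (1 : R) dx (ddx t))
  (ode : forall t, ddx t + c *: dx t + g (x t) = 0).

Lemma ode_accel t : ddx t = - (c *: dx t + g (x t)).
Proof. by apply/eqP; rewrite -addr_eq0 addrA ode. Qed.

Lemma accel_diff u s : `|ddx u - ddx s| <= c * `|dx u - dx s| + K * `|x u - x s|.
Proof.
have -> : ddx u - ddx s = - (c *: (dx u - dx s) + (g (x u) - g (x s))).
  by rewrite !ode_accel scalerBr opprD opprK !opprD !opprK addrACA.
rewrite normrN; apply: le_trans (ler_normD _ _) _.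
by rewrite normrZ ger0_norm // lerD // g_lip.
Qed.

Lemma ode_taylor_bounds (T : R) : 0 <= T -> exists C D : R, [/\ 0 <= C, 0 <= D,
  (forall s, 0 <= s <= T -> `|dx s| <= D) &
  (forall s h, 0 <= s -> 0 <= h -> s + h <= T ->
     `|x (s + h) - x s - h *: dx (s + h)| <= C * h ^+ 2 /\
     `|dx (s + h) - dx s - h *: ddx s| <= C * h ^+ 2)].
Proof.
move=> T0.
have [Xb [Xb0 x_le]] := bounded_on_segment (continuous_of_derive x_deriv) T0.
have [D [D0 dx_le]] := bounded_on_segment (continuous_of_derive dx_deriv) T0.
set M := c * D + K * Xb + `|g 0|.
have M0 : 0 <= M by rewrite /M !addr_ge0 ?mulr_ge0.
have ddx_le s : 0 <= s <= T -> `|ddx s| <= M.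
  move=> sT; rewrite ode_accel normrN; apply: le_trans (ler_normD _ _) _.
  rewrite normrZ ger0_norm // /M -addrA lerD ?ler_wpM2l ?dx_le //.
  rewrite -(subrK (g 0) (g (x s))); apply: le_trans (ler_normD _ _) _.
  by rewrite lerD // (le_trans (g_lip _ _)) // subr0 ler_wpM2l // x_le.
have in_seg v u : 0 <= v -> v <= u -> u <= T -> forall w, v <= w <= u -> 0 <= w <= T.
  by move=> v0 vu uT w /andP[vw wu]; apply/andP; split; lra.
have dx_lip u v : 0 <= v -> v <= u -> u <= T -> `|dx u - dx v| <= M * (u - v).
  move=> v0 vu uT; apply: (lipschitz_of_derive_bound dx_deriv vu M0).
  by move=> w /(in_seg _ _ v0 vu uT) /ddx_le.
have x_lip u v : 0 <= v -> v <= u -> u <= T -> `|x u - x v| <= D * (u - v).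
  move=> v0 vu uT; apply: (lipschitz_of_derive_bound x_deriv vu D0).
  by move=> w /(in_seg _ _ v0 vu uT) /dx_le.
set N := c * M + K * D.
have N0 : 0 <= N by rewrite /N addr_ge0 ?mulr_ge0.
have ddx_lip u v : 0 <= v -> v <= u -> u <= T -> `|ddx u - ddx v| <= N * (u - v).
  move=> v0 vu uT; apply: le_trans (accel_diff _ _) _.
  apply: le_trans (lerD (ler_wpM2l c0 (dx_lip _ _ v0 vu uT))
                        (ler_wpM2l K0 (x_lip _ _ v0 vu uT))) _.
  by rewrite [N * _]mulrDl -!mulrA.
exists (M + N), D; split => [||//|s h s0 h0 shT]; [exact: addr_ge0 | exact: D0 |].
have s_sh : s <= s + h by rewrite lerDl.
have [x_taylor _] := taylor_lipschitz x_deriv s_sh M0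
  (fun u v sv vu ush => dx_lip u v (le_trans s0 sv) vu (le_trans ush shT)).
have [_ dx_taylor] := taylor_lipschitz dx_deriv s_sh N0
  (fun u v sv vu ush => ddx_lip u v (le_trans s0 sv) vu (le_trans ush shT)).
have sh_s : s + h - s = h by rewrite addrAC subrr add0r.
rewrite sh_s in x_taylor dx_taylor.
have h2_ge0 : 0 <= h ^+ 2 by rewrite sqr_ge0.
split; [apply: le_trans x_taylor _ | apply: le_trans dx_taylor _];
  rewrite ler_wpM2r // ?lerDl ?lerDr //.
Qed.
End DampedODE.

Section ErrorArithmetic.
Variable R : realType.

(* The velocity error: with |beta| <= 1 + h c + h eta, the gradient evaluated at
   the extrapolated point y_k costs at most K (|e_k| + (2 + c) h (|w_k| + D)). *)
Lemma velocity_error_arith (h c K D C eta b nwk nek ny nw1 : R) :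
  0 < h -> h <= 1 -> 0 <= c -> 0 <= K -> 0 <= D -> 0 <= eta -> eta <= 1 ->
  0 <= b -> b <= 1 + h * c + h * eta -> 0 <= nwk ->
  ny <= nek + b * h * (nwk + D) ->
  nw1 <= b * nwk + h * eta * D + h * K * ny + C * h ^+ 2 ->
  nw1 <= (1 + h * (c + 1 + K * (2 + c))) * nwk + h * K * nek
         + h * (eta * D + K * (2 + c) * h * D + C * h).
Proof.
move=> h0 h1 c0 K0 D0 eta0 eta1 b0 b_le nwk0 ny_le nw1_le.
have hK0 : 0 <= h * K by rewrite mulr_ge0 // ltW.
have b_nwk : b * nwk <= (1 + h * (c + 1)) * nwk by apply: ler_wpM2r => //; nra.
have bh_le : b * h <= (2 + c) * h by apply: ler_wpM2r; [lra | nra].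
have ny_le' : ny <= nek + (2 + c) * h * (nwk + D).
  by apply: le_trans ny_le _; rewrite lerD2l ler_wpM2r //; lra.
have hK_ny : h * K * ny <= h * K * nek + h * K * ((2 + c) * h * nwk)
                           + h * K * ((2 + c) * h * D).
  by rewrite -!mulrDr ler_wpM2l //; lra.
have hh_nwk : h * K * ((2 + c) * h * nwk) <= h * (K * (2 + c)) * nwk.
  have P : 0 <= h * K * (2 + c) * nwk by rewrite !mulr_ge0 // ?ltW //; lra.
  have -> : h * K * ((2 + c) * h * nwk) = (h * K * (2 + c) * nwk) * h by ring.
  have -> : h * (K * (2 + c)) * nwk = (h * K * (2 + c) * nwk) * 1 by ring.
  exact: ler_wpM2l.
have -> : h * (eta * D + K * (2 + c) * h * D + C * h) =
          h * eta * D + h * K * ((2 + c) * h * D) + C * h ^+ 2 by ring.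
have -> : (1 + h * (c + 1 + K * (2 + c))) * nwk =
          (1 + h * (c + 1)) * nwk + h * (K * (2 + c)) * nwk by ring.
lra.
Qed.

(* Summing the position and velocity errors, the total error grows by a factor
   1 + h A per step, plus a local error h eps. *)
Lemma total_error_arith (h K A1 e1 C nwk nek nw1 ne1 : R) :
  0 < h -> h <= 1 -> 0 <= K -> 0 <= A1 -> 0 <= e1 -> 0 <= nwk -> 0 <= nek ->
  nw1 <= (1 + h * A1) * nwk + h * K * nek + h * e1 ->
  ne1 <= nek + h * nw1 + C * h ^+ 2 ->
  ne1 + nw1 <= (1 + h * (1 + 2 * A1 + 2 * K)) * (nek + nwk) + h * (2 * e1 + C * h).
Proof.
move=> h0 h1 K0 A10 e10 nwk0 nek0 nw1_le ne1_le.
have hA_nwk : h * nwk * (h * A1) <= h * A1 * nwk.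
  have -> : h * nwk * (h * A1) = h * A1 * nwk * h by ring.
  by rewrite -[leRHS]mulr1 ler_wpM2l // !mulr_ge0 // ltW.
have hK_nek : h * K * nek * h <= h * K * nek.
  by rewrite -[leRHS]mulr1 ler_wpM2l // !mulr_ge0 // ltW.
have he1 : h * e1 * h <= h * e1.
  by rewrite -[leRHS]mulr1 ler_wpM2l // !mulr_ge0 // ltW.
have hnw1 : h * nw1 <= h * ((1 + h * A1) * nwk + h * K * nek + h * e1).
  by rewrite ler_wpM2l // ltW.
have t1 : 0 <= h * A1 * nek by rewrite !mulr_ge0 // ltW.
have t2 : 0 <= h * nek by rewrite !mulr_ge0 // ltW.
have t3 : 0 <= h * K * nwk by rewrite !mulr_ge0 // ltW.
lra.
Qed.
End ErrorArithmetic.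

Lemma discrete_gronwall (R : realType) (a : nat -> R) (A h eps : R) (N : nat) :
  0 <= A -> 0 <= h -> 0 <= eps -> 0 <= a 0%N ->
  (forall k, (k < N)%N -> a k.+1 <= (1 + h * A) * a k + h * eps) ->
  a N <= expR (N%:R * h * A) * (a 0%N + N%:R * h * eps).
Proof.
move=> A0 h0 eps0 a0_ge0 a_step; set q := 1 + h * A.
have q_ge1 : 1 <= q by rewrite lerDl mulr_ge0.
have a_pow k : (k <= N)%N -> a k <= q ^+ k * (a 0%N + k%:R * h * eps).
  elim: k => [|k IH] kN; first by rewrite expr0 mul1r mul0r mul0r addr0.
  apply: le_trans (a_step k kN) _.
  have qk_ge1 : 1 <= q ^+ k.+1 by rewrite exprn_ege1.
  have heps0 : 0 <= h * eps by rewrite mulr_ge0.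
  have qa : q * a k <= q ^+ k.+1 * (a 0%N + k%:R * h * eps).
    by rewrite exprS -mulrA ler_wpM2l ?IH ?(ltnW kN) // (le_trans _ q_ge1).
  have heps : h * eps <= q ^+ k.+1 * (h * eps) by rewrite ler_peMl.
  have -> : q ^+ k.+1 * (a 0%N + k.+1%:R * h * eps) =
      q ^+ k.+1 * (a 0%N + k%:R * h * eps) + q ^+ k.+1 * (h * eps).
    by rewrite -natr1; ring.
  exact: lerD.
apply: le_trans (a_pow N (leqnn N)) _.
rewrite ler_wpM2r ?addr_ge0 ?mulr_ge0 //.
rewrite -mulrA expRM_natl lerXn2r ?nnegrE ?expR_ge0 ?(le_trans _ q_ge1) //.
by rewrite /q expR_ge1Dx.
Qed.

Section NesterovScheme.
Variables (R : realType) (d : nat).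
Local Notation vec := 'rV[R]_d.
Variables (g : vec -> vec) (h beta : R) (q0 : vec * vec).

Definition nag_pos k := (nag (h ^+ 2) beta g q0 k).2.
Definition nag_vel k :=
  h^-1 *: ((nag (h ^+ 2) beta g q0 k).2 - (nag (h ^+ 2) beta g q0 k).1).
Definition nag_probe k := nag_pos k + (beta * h) *: nag_vel k.

Hypothesis h_gt0 : 0 < h.

Lemma nag_pos_S k : nag_pos k.+1 = nag_pos k + h *: nag_vel k.+1.
Proof. by apply/rowP => i; rewrite /nag_vel /nag_pos !mxE; field; rewrite gt_eqF. Qed.

Lemma nag_vel_S k : nag_vel k.+1 = beta *: nag_vel k - h *: g (nag_probe k).
Proof.
have -> : nag_probe k = (nag (h ^+ 2) beta g q0 k).2
    + beta *: ((nag (h ^+ 2) beta g q0 k).2 - (nag (h ^+ 2) beta g q0 k).1).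
  by apply/rowP => i; rewrite /nag_probe /nag_vel /nag_pos !mxE; field; rewrite gt_eqF.
by apply/rowP => i; rewrite /nag_vel /= !mxE; field; rewrite gt_eqF.
Qed.
End NesterovScheme.

Section SchemeError.
Variables (R : realType) (d : nat).
Local Notation vec := 'rV[R]_d.
Variables (g : vec -> vec) (K c : R) (x dx ddx : R -> vec).
Hypotheses (K0 : 0 <= K) (c0 : 0 <= c)
  (g_lip : forall u v, `|g u - g v| <= K * `|u - v|)
  (ode : forall t, ddx t + c *: dx t + g (x t) = 0).
Variables (h beta : R) (q0 : vec * vec) (eta C D T : R).
Hypotheses (h_gt0 : 0 < h) (h_le1 : h <= 1) (eta_ge0 : 0 <= eta) (eta_le1 : eta <= 1)
  (beta_near : `|beta - 1 + h * c| <= h * eta) (C0 : 0 <= C) (D0 : 0 <= D)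
  (dx_le : forall s, 0 <= s <= T -> `|dx s| <= D)
  (taylor : forall s h', 0 <= s -> 0 <= h' -> s + h' <= T ->
     `|x (s + h') - x s - h' *: dx (s + h')| <= C * h' ^+ 2 /\
     `|dx (s + h') - dx s - h' *: ddx s| <= C * h' ^+ 2).

Let ek k := nag_pos g h beta q0 k - x (k%:R * h).
Let wk k := nag_vel g h beta q0 k - dx (k%:R * h).
Let growth := 1 + 2 * (c + 1 + K * (2 + c)) + 2 * K.
Let local_err := 2 * (eta * D + K * (2 + c) * h * D + C * h) + C * h.

Lemma error_step k : k.+1%:R * h <= T ->
  `|ek k.+1| + `|wk k.+1| <= (1 + h * growth) * (`|ek k| + `|wk k|) + h * local_err.
Proof.
move=> kT; set s := k%:R * h.
have s0 : 0 <= s by rewrite /s mulr_ge0 // ltW.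
have sh : k.+1%:R * h = s + h by rewrite /s -natr1 mulrDl mul1r.
rewrite sh in kT.
have [x_taylor dx_taylor] := taylor s0 (ltW h_gt0) kT.
have dx_s : `|dx s| <= D.
  by apply: dx_le; rewrite s0 /=; apply: le_trans kT; rewrite lerDl ltW.
have w_eq : wk k.+1 = beta *: wk k + (beta - 1 + h * c) *: dx s
    - h *: (g (nag_probe g h beta q0 k) - g (x s)) - (dx (s + h) - dx s - h *: ddx s).
  rewrite /wk sh nag_vel_S // (ode_accel ode s).
  by apply/rowP => i; rewrite !mxE; ring.
have e_eq : ek k.+1 = ek k + h *: wk k.+1 - (x (s + h) - x s - h *: dx (s + h)).
  by rewrite /ek /wk sh nag_pos_S //; apply/rowP => i; rewrite !mxE; ring.
have y_eq : nag_probe g h beta q0 k - x s = ek k + (beta * h) *: (wk k + dx s).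
  by rewrite /nag_probe /ek /wk; apply/rowP => i; rewrite !mxE; ring.
have beta_le : `|beta| <= 1 + h * c + h * eta.
  have -> : beta = (1 - h * c) + (beta - 1 + h * c) by ring.
  apply: le_trans (ler_normD _ _) (lerD _ beta_near).
  by apply: le_trans (ler_normB _ _) _; rewrite normr1 ger0_norm // mulr_ge0 // ltW.
have y_le : `|nag_probe g h beta q0 k - x s| <= `|ek k| + `|beta| * h * (`|wk k| + D).
  rewrite y_eq; apply: le_trans (ler_normD _ _) _.
  rewrite lerD2l normrZ normrM (gtr0_norm h_gt0).
  apply: ler_wpM2l; first by rewrite mulr_ge0 // ltW.
  by apply: le_trans (ler_normD _ _) _; rewrite lerD2l.
have w_le : `|wk k.+1| <= `|beta| * `|wk k| + h * eta * D
    + h * K * `|nag_probe g h beta q0 k - x s| + C * h ^+ 2.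
  rewrite w_eq; apply: le_trans (ler_normB _ _) (lerD _ dx_taylor).
  apply: le_trans (ler_normB _ _) (lerD _ _).
    by apply: le_trans (ler_normD _ _) _; rewrite !normrZ lerD // ler_pM.
  rewrite normrZ (gtr0_norm h_gt0) -mulrA.
  by apply: ler_wpM2l; [exact: ltW | exact: g_lip].
have e_le : `|ek k.+1| <= `|ek k| + h * `|wk k.+1| + C * h ^+ 2.
  rewrite e_eq; apply: le_trans (ler_normB _ _) (lerD _ x_taylor).
  by apply: le_trans (ler_normD _ _) _; rewrite lerD // normrZ gtr0_norm.
have h_ge0 := ltW h_gt0.
have A1_ge0 : 0 <= c + 1 + K * (2 + c) by rewrite !(addr_ge0, mulr_ge0).
have e1_ge0 : 0 <= eta * D + K * (2 + c) * h * D + C * h.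
  by rewrite !(addr_ge0, mulr_ge0).
apply: (total_error_arith h_gt0 h_le1 K0 A1_ge0 e1_ge0 (normr_ge0 _) (normr_ge0 _) _ e_le).
exact: (velocity_error_arith h_gt0 h_le1 c0 K0 D0 eta_ge0 eta_le1
  (normr_ge0 _) beta_le (normr_ge0 _) y_le w_le).
Qed.

Lemma error_bound N : N%:R * h <= T ->
  `|ek N| + `|wk N| <= expR (T * growth) * (`|ek 0%N| + `|wk 0%N| + T * local_err).
Proof.
move=> NT; have h_ge0 := ltW h_gt0.
have T0 : 0 <= T by apply: le_trans NT; rewrite mulr_ge0.
have growth_ge0 : 0 <= 1 + 2 * (c + 1 + K * (2 + c)) + 2 * K.
  by rewrite !(addr_ge0, mulr_ge0).
have err_ge0 : 0 <= 2 * (eta * D + K * (2 + c) * h * D + C * h) + C * h.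
  by rewrite !(addr_ge0, mulr_ge0).
apply: le_trans (discrete_gronwall (a := fun k => `|ek k| + `|wk k|) (N := N)
  growth_ge0 h_ge0 err_ge0 (addr_ge0 (normr_ge0 _) (normr_ge0 _)) _) _.
  move=> k kN; apply: error_step; apply: le_trans NT.
  by rewrite ler_wpM2r // ler_nat.
apply: ler_pM.
- exact: expR_ge0.
- by rewrite !(addr_ge0, mulr_ge0).
- by rewrite ler_expR; apply: ler_wpM2r.
- by rewrite lerD2l; apply: ler_wpM2r.
Qed.
End SchemeError.

Lemma cvg0_dominated (R : realType) (V : normedModType R) (u : nat -> V) (B : nat -> R) :
  (\forall n \near \oo, `|u n| <= B n) -> B n @[n --> \oo] --> 0 ->
  u n @[n --> \oo] --> 0.
Proof.
move=> u_le B0; apply/cvgrPdist_lt => e e0.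
have B_lt := cvgr_lt _ B0 e e0.
near=> n; rewrite sub0r normrN.
apply: (@le_lt_trans _ _ (B n)); [near: n; exact: u_le | near: n; exact: B_lt].
Unshelve. all: by end_near.
Qed.

Lemma cvg_at_right_seq (R : realType) (F : R -> R) (l : R)
  (hs : nat -> R) :
  (forall n, 0 < hs n) -> hs n @[n --> \oo] --> 0 ->
  F h @[h --> 0^'+] --> l -> F (hs n) @[n --> \oo] --> l.
Proof. by move=> hs_gt0 hs0 /cvg_at_rightP; apply. Qed.

Section SchemeConvergence.
Variables (R : realType) (d : nat).
Local Notation vec := 'rV[R]_d.
Variables (g : vec -> vec) (K c : R) (x dx ddx : R -> vec).
Hypotheses (K0 : 0 <= K) (c0 : 0 <= c)
  (g_lip : forall u v, `|g u - g v| <= K * `|u - v|)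
  (x_deriv : forall t : R, is_derive t (1 : R) x (dx t))
  (dx_deriv : forall t : R, is_derive t (1 : R) dx (ddx t))
  (ode : forall t, ddx t + c *: dx t + g (x t) = 0).
Variables (beta : R -> R) (xm1 x0 : R -> vec) (t : R) (hs : nat -> R) (ks : nat -> nat).
Hypotheses (t0 : 0 <= t) (hs_gt0 : forall n, 0 < hs n) (hs0 : hs n @[n --> \oo] --> 0)
  (khs_t : (ks n)%:R * hs n @[n --> \oo] --> t)
  (beta_o : (beta h - (1 - c * h)) / h @[h --> 0^'+] --> 0)
  (x0_cvg : x0 h @[h --> 0^'+] --> x 0)
  (v0_cvg : h^-1 *: (x0 h - xm1 h) @[h --> 0^'+] --> dx 0).

Let pos n := nag_pos g (hs n) (beta (hs n)) (xm1 (hs n), x0 (hs n)) (ks n).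
Let vel n := nag_vel g (hs n) (beta (hs n)) (xm1 (hs n), x0 (hs n)) (ks n).

Lemma initial_error_cvg :
  `|x0 (hs n) - x 0| + `|(hs n)^-1 *: (x0 (hs n) - xm1 (hs n)) - dx 0|
    @[n --> \oo] --> 0.
Proof.
apply: (@cvg_at_right_seq _ (fun h => `|x0 h - x 0| + `|h^-1 *: (x0 h - xm1 h) - dx 0|))
  => //.
have pos_err : `|x0 h - x 0| @[h --> 0^'+] --> `|x 0 - x 0|.
  by apply: cvg_norm; apply: cvgB => //; exact: cvg_cst.
have vel_err : `|h^-1 *: (x0 h - xm1 h) - dx 0| @[h --> 0^'+] --> `|dx 0 - dx 0|.
  by apply: cvg_norm; apply: cvgB => //; exact: cvg_cst.
by have := cvgD pos_err vel_err; rewrite !subrr normr0 addr0; exact.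
Qed.

(* The Gronwall bound on [0, t + 1] tends to zero, since eta_n (the o(h) part
   of beta_h, divided by h) and the initial errors do. *)
Lemma global_error_cvg :
  (pos n - x ((ks n)%:R * hs n) @[n --> \oo] --> (0 : vec)) /\
  (vel n - dx ((ks n)%:R * hs n) @[n --> \oo] --> (0 : vec)).
Proof.
set T := t + 1; have T0 : 0 <= T by rewrite /T addr_ge0.
have [C [D [C0 D0 dx_le taylor]]] := ode_taylor_bounds K0 c0 g_lip x_deriv dx_deriv ode T0.
set eta := fun n => `|(beta (hs n) - (1 - c * hs n)) / hs n|.
set a0 := fun n =>
  `|x0 (hs n) - x 0| + `|(hs n)^-1 *: (x0 (hs n) - xm1 (hs n)) - dx 0|.
set B := fun n => expR (T * (1 + 2 * (c + 1 + K * (2 + c)) + 2 * K)) *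
  (a0 n + T * (2 * (eta n * D + K * (2 + c) * hs n * D + C * hs n) + C * hs n)).
have eta0 : eta n @[n --> \oo] --> 0.
  apply: (@cvg_at_right_seq _ (fun h => `|(beta h - (1 - c * h)) / h|)) => //.
  by rewrite -[X in _ --> X](@normr0 _ R); apply: cvg_norm.
have B0 : B n @[n --> \oo] --> 0.
  have : B n @[n --> \oo] --> expR (T * (1 + 2 * (c + 1 + K * (2 + c)) + 2 * K)) *
      (0 + T * (2 * (0 * D + K * (2 + c) * 0 * D + C * 0) + C * 0)).
    repeat first [exact: cvg_cst | exact: initial_error_cvg | exact: eta0 | exact: hs0
      | apply: cvgD | apply: cvgM].
  by rewrite !(mul0r, mulr0, addr0).
have err_le : \forall n \near \oo,
    `|pos n - x ((ks n)%:R * hs n)| + `|vel n - dx ((ks n)%:R * hs n)| <= B n.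
  have hs_lt1 : \forall n \near \oo, hs n < 1 by exact: cvgr_lt hs0 _ ltr01.
  have eta_lt1 : \forall n \near \oo, eta n < 1 by exact: cvgr_lt eta0 _ ltr01.
  have khs_lt : \forall n \near \oo, (ks n)%:R * hs n < T.
    by apply: cvgr_lt khs_t _ _; rewrite /T ltrDl.
  near=> n.
  have beta_near : `|beta (hs n) - 1 + hs n * c| <= hs n * eta n.
    have -> : beta (hs n) - 1 + hs n * c = beta (hs n) - (1 - c * hs n) by ring.
    by rewrite /eta normrM normfV (gtr0_norm (hs_gt0 n)) mulrCA divff ?mulr1 ?gt_eqF.
  have := error_bound K0 c0 g_lip ode (xm1 (hs n), x0 (hs n)) (hs_gt0 n) _ (normr_ge0 _) _
    beta_near C0 D0 dx_le taylor (N := ks n).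
  rewrite /= mul0r; apply.
  - by apply: ltW; near: n.
  - by apply: ltW; near: n.
  - by apply: ltW; near: n.
split; apply: (cvg0_dominated _ B0); apply: filterS err_le => n err_n;
  by apply: le_trans err_n; rewrite ?lerDl ?lerDr.
Unshelve. all: by end_near.
Qed.
End SchemeConvergence.

Lemma scheme_cvg (R : realType) (d : nat) (g : 'rV[R]_d -> 'rV[R]_d) (K c : R)
  (x dx ddx : R -> 'rV[R]_d) (beta : R -> R) (xm1 x0 : R -> 'rV[R]_d)
  (t : R) (hs : nat -> R) (ks : nat -> nat) :
  0 <= K -> 0 <= c -> (forall u v, `|g u - g v| <= K * `|u - v|) ->
  (forall t : R, is_derive t (1 : R) x (dx t)) ->
  (forall t : R, is_derive t (1 : R) dx (ddx t)) ->
  (forall t, ddx t + c *: dx t + g (x t) = 0) ->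
  0 <= t -> (forall n, 0 < hs n) -> hs n @[n --> \oo] --> 0 ->
  (ks n)%:R * hs n @[n --> \oo] --> t ->
  (beta h - (1 - c * h)) / h @[h --> 0^'+] --> 0 ->
  x0 h @[h --> 0^'+] --> x 0 ->
  h^-1 *: (x0 h - xm1 h) @[h --> 0^'+] --> dx 0 ->
  let q n := (xm1 (hs n), x0 (hs n)) in
  [/\ nag_pos g (hs n) (beta (hs n)) (q n) (ks n) @[n --> \oo] --> x t,
      nag_vel g (hs n) (beta (hs n)) (q n) (ks n) @[n --> \oo] --> dx t
    & nag_vel g (hs n) (beta (hs n)) (q n) (ks n).+1 @[n --> \oo] --> dx t].
Proof.
move=> K0 c0 g_lip x_deriv dx_deriv ode t0 hs_gt0 hs0 khs_t beta_o x0_cvg v0_cvg q.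
have khs1_t : (ks n).+1%:R * hs n @[n --> \oo] --> t.
  under eq_fun do rewrite -natr1 mulrDl mul1r.
  by rewrite -[t]addr0; apply: cvgD.
have [pos_err vel_err] := global_error_cvg K0 c0 g_lip x_deriv dx_deriv ode
  t0 hs_gt0 hs0 khs_t beta_o x0_cvg v0_cvg.
have [_ vel1_err] := global_error_cvg K0 c0 g_lip x_deriv dx_deriv ode
  t0 hs_gt0 hs0 khs1_t beta_o x0_cvg v0_cvg.
have x_cont := continuous_of_derive x_deriv.
have dx_cont := continuous_of_derive dx_deriv.
split.
- by apply: cvg_sub0 pos_err _; apply: continuous_cvg; [exact: x_cont | exact: khs_t].
- by apply: cvg_sub0 vel_err _; apply: continuous_cvg; [exact: dx_cont | exact: khs_t].
- by apply: cvg_sub0 vel1_err _; apply: continuous_cvg; [exact: dx_cont | exact: khs1_t].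
Qed.

(* Discrete-to-continuous decay factors: if a_n -> 0 and k_n a_n -> l then
   (1 - a_n)^(-k_n) -> e^l; squeeze between e^(k a) and e^(k a / (1 - a)). *)
Lemma one_sub_powN_cvg (R : realType) (a : nat -> R) (k : nat -> nat) (l : R) :
  a n @[n --> \oo] --> 0 -> (k n)%:R * a n @[n --> \oo] --> l ->
  (1 - a n) ^- (k n) @[n --> \oo] --> expR l.
Proof.
move=> a0 ka_l.
have lower : expR ((k n)%:R * a n) @[n --> \oo] --> expR l.
  by apply: continuous_cvg; [exact: continuous_expR | exact: ka_l].
have ka_l' : (k n)%:R * a n * (1 - a n)^-1 @[n --> \oo] --> l.
  have : (k n)%:R * a n * (1 - a n)^-1 @[n --> \oo] --> l * (1 - 0)^-1.
    apply: cvgM => //; apply: cvgV; first by rewrite subr0 oner_neq0.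
    by apply: cvgB => //; exact: cvg_cst.
  by rewrite subr0 invr1 mulr1.
have upper : expR ((k n)%:R * a n * (1 - a n)^-1) @[n --> \oo] --> expR l.
  by apply: continuous_cvg; [exact: continuous_expR | exact: ka_l'].
apply: (squeeze_cvgr _ lower upper).
have a_lt1 : \forall n \near \oo, a n < 1 by exact: cvgr_lt a0 _ ltr01.
near=> n.
have an_lt1 : a n < 1 by near: n.
have one_sub_gt0 : 0 < 1 - a n by rewrite subr_gt0.
apply/andP; split.
  rewrite expRM_natl -exprVn; apply: lerXn2r;
    [by rewrite nnegrE expR_ge0 | by rewrite nnegrE invr_ge0 ltW |].
  rewrite -[X in X <= _]invrK lef_pV2 ?posrE ?invr_gt0 ?expR_gt0 // -expRN.
  by have := expR_ge1Dx (- a n); rewrite addrC.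
rewrite -mulrA expRM_natl -exprVn; apply: lerXn2r;
  [by rewrite nnegrE invr_ge0 ltW | by rewrite nnegrE expR_ge0 |].
have inv_eq : (1 - a n)^-1 = 1 + a n * (1 - a n)^-1 by field; rewrite gt_eqF.
by rewrite [X in X <= _]inv_eq expR_ge1Dx.
Unshelve. all: by end_near.
Qed.

Lemma lyapunov_cvg (R : realType) (d : nat) (m : R) (f : 'rV[R]_d -> R)
  (xstar X W : 'rV[R]_d) (t rbar : R) (hs rs : nat -> R) (ks : nat -> nat)
  (xk xkm1 : nat -> 'rV[R]_d) :
  0 < m -> (forall n, 0 < hs n) -> hs n @[n --> \oo] --> 0 ->
  (ks n)%:R * hs n @[n --> \oo] --> t -> rs n @[n --> \oo] --> rbar ->
  xk n @[n --> \oo] --> X -> (hs n)^-1 *: (xk n - xkm1 n) @[n --> \oo] --> W ->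
  {for X, continuous f} ->
  let delta n := Num.sqrt m * hs n in
  (1 - rs n * delta n) ^- (ks n) *
    (f (xk n) - f xstar + m / 2 *
      enorm ((1 - rs n * delta n) / delta n *: (xk n - xkm1 n) + rs n *: (xk n - xstar)) ^+ 2)
  @[n --> \oo] -->
  expR (Num.sqrt m * rbar * t) *
    (f X - f xstar + m / 2 * enorm ((Num.sqrt m)^-1 *: W + rbar *: (X - xstar)) ^+ 2).
Proof.
move=> m0 hs_gt0 hs0 khs_t rs_r xk_X vk_W f_cont delta.
have sm0 : 0 < Num.sqrt m by rewrite sqrtr_gt0.
have delta0 : delta n @[n --> \oo] --> 0.
  by rewrite -(mulr0 (Num.sqrt m)); apply: cvgM => //; exact: cvg_cst.
have u_eq n : (1 - rs n * delta n) / delta n *: (xk n - xkm1 n) + rs n *: (xk n - xstar) =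
    ((1 - rs n * delta n) / Num.sqrt m) *: ((hs n)^-1 *: (xk n - xkm1 n))
    + rs n *: (xk n - xstar).
  by apply/rowP => i; rewrite /delta !mxE; field; rewrite !gt_eqF.
have u_cvg : ((1 - rs n * delta n) / Num.sqrt m) *: ((hs n)^-1 *: (xk n - xkm1 n))
    + rs n *: (xk n - xstar) @[n --> \oo] -->
    ((1 - rbar * 0) / Num.sqrt m) *: W + rbar *: (X - xstar).
  apply: cvgD; apply: cvgZ => //.
  - by apply: cvgM; [apply: cvgB; [exact: cvg_cst | exact: cvgM] | exact: cvg_cst].
  - by apply: cvgB => //; exact: cvg_cst.
rewrite mulr0 subr0 div1r in u_cvg.
under eq_fun do rewrite enorm_sq u_eq.
rewrite enorm_sq; apply: cvgM.
  apply: one_sub_powN_cvg; first by rewrite -(mulr0 rbar); exact: cvgM.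
  have -> : (fun n => (ks n)%:R * (rs n * delta n)) =
      (fun n => rs n * Num.sqrt m * ((ks n)%:R * hs n)).
    by apply: funext => n; rewrite /delta; ring.
  rewrite [Num.sqrt m * rbar]mulrC.
  by apply: cvgM => //; apply: cvgM => //; exact: cvg_cst.
apply: cvgD; first by apply: cvgB; [apply: continuous_cvg | exact: cvg_cst].
by apply: cvgM; [exact: cvg_cst | exact: dotv_cvg].
Qed.
Unset Implicit Arguments.

Theorem theorem7 (R : realType) (d : nat) (m L : R)
  (f : 'rV[R]_d -> R) (gradf : 'rV[R]_d -> 'rV[R]_d) (xstar : 'rV[R]_d)
  (bbar : R) (x dx ddx : R -> 'rV[R]_d)
  (beta : R -> R) (xm1 x0 : R -> 'rV[R]_d) (rh : R -> R) (rbar : R) :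
  0 < m -> m <= L ->
  is_gradient f gradf -> strongly_convex m f gradf -> L_smooth L gradf ->
  (forall y, f xstar <= f y) ->
  0 < bbar ->
  (* x is the solution of x'' + bbar sqrt(m) x' + grad f(x) = 0 *)
  (forall t : R, is_derive t (1 : R) x (dx t)) ->
  (forall t : R, is_derive t (1 : R) dx (ddx t)) ->
  (forall t : R, ddx t + (bbar * Num.sqrt m) *: dx t + gradf (x t) = 0) ->
  (* beta_h = 1 - bbar sqrt(m) h + o(h) *)
  ((beta h - (1 - bbar * Num.sqrt m * h)) / h @[h --> 0^'+] --> 0) ->
  (* initial data *)
  (x0 h @[h --> 0^'+] --> x 0) ->
  (h^-1 *: (x0 h - xm1 h) @[h --> 0^'+] --> dx 0) ->
  (* r_h is the unique real root of Xi_delta(., b_h) (for small h) *)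
  (exists h0 : R, 0 < h0 /\ forall h, 0 < h < h0 -> forall r : R,
      Xi (Num.sqrt m * h) r ((1 - beta h) / (Num.sqrt m * h)) = 0 <-> r = rh h) ->
  (* rbar is the unique real root of Xibar(., bbar) *)
  (forall r : R, Xibar r bbar = 0 <-> r = rbar) ->
  (rh h @[h --> 0^'+] --> rbar) /\
  forall (t : R) (hs : nat -> R) (ks : nat -> nat),
    0 <= t ->
    (forall n, 0 < hs n) -> (hs @ \oo --> 0) ->
    (ks @ \oo --> \oo) ->
    ((fun n => (ks n)%:R * hs n) @ \oo --> t) ->
    let xk := fun n => (nag (hs n ^+ 2) (beta (hs n)) gradf (xm1 (hs n), x0 (hs n)) (ks n)).2 in
    let xkm1 := fun n => (nag (hs n ^+ 2) (beta (hs n)) gradf (xm1 (hs n), x0 (hs n)) (ks n)).1 in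
    let xk1 := fun n => (nag (hs n ^+ 2) (beta (hs n)) gradf (xm1 (hs n), x0 (hs n)) (ks n).+1).2 in
    let delta := fun n => Num.sqrt m * hs n in
    let V := fun n =>
      (1 - rh (hs n) * delta n) ^- (ks n) *
      (f (xk n) - f xstar + m / 2 *
        enorm ((1 - rh (hs n) * delta n) / delta n *: (xk n - xkm1 n)
               + rh (hs n) *: (xk n - xstar)) ^+ 2) in
    let Vbar := expR (Num.sqrt m * rbar * t) *
      (f (x t) - f xstar + m / 2 *
        enorm ((Num.sqrt m)^-1 *: dx t + rbar *: (x t - xstar)) ^+ 2) in
    [/\ (xk @ \oo --> x t),
        ((fun n => (hs n)^-1 *: (xk1 n - xk n)) @ \oo --> dx t)
      & (V @ \oo --> Vbar)].
Proof.
move=> m0 mL f_grad _ f_smooth _ bbar0 x_deriv dx_deriv ode beta_o x0_cvg v0_cvg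
  rh_root rbar_root.
have rh_cvg := rate_cvg m0 beta_o rh_root rbar_root.
split => // t hs ks t0 hs_gt0 hs0 _ khs_t xk xkm1 xk1 delta V Vbar.
have L0 : 0 <= L := le_trans (ltW m0) mL.
have c0 : 0 <= bbar * Num.sqrt m by rewrite mulr_ge0 ?sqrtr_ge0 ?ltW.
have [xk_cvg vk_cvg vk1_cvg] := scheme_cvg (mulr_ge0 L0 (ler0n _ d)) c0
  (smooth_lipschitz_norm L0 f_smooth) x_deriv dx_deriv ode t0 hs_gt0 hs0 khs_t
  beta_o x0_cvg v0_cvg.
have f_cont : {for x t, continuous f}.
  exact: differentiable_continuous (f_grad (x t)).1.
split => //.
exact: lyapunov_cvg m0 hs_gt0 hs0 khs_t (cvg_at_right_seq hs_gt0 hs0 rh_cvg)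
  xk_cvg vk_cvg f_cont.
Qed.
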